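(* Consider the algorithm SCHEMATIC-ALGO$(G,\mu^*,m^*,\Delta^*,\gamma)$ described in the context. At the end of its last round, with high probability $|U|<\mu^*\cdot(\Delta^* )^\gamma$, where $U$ is the set of edges of $E\setminus H$ underfull w.r.t. the final set $H$.
   Context: Let $G=(V,E)$ be a graph with $n$ vertices, $m$ edges, average degree $d$; $\mu(G)$ is its maximum matching size. Fix a small constant $\epsilon\in(0,1)$ and $\beta:=1/\Theta(\epsilon^3)$. For $H\subseteq E$ and a pair $e=(u,v)$, $\deg_e(H):=\deg_u(H)+\deg_v(H)$. An edge $e$ is underfull w.r.t. $H$ if $\deg_e(H)<(1-\epsilon)\beta$ and overfull w.r.t. $H$ if $\deg_e(H)>\beta$. The parameters satisfy $\mu(G)/(2+\epsilon)\le\mu^*\le n$, $d\le\Delta^*\le n$, $m^*\ge m$, $0<\gamma<1$. SCHEMATIC-ALGO: set $H\leftarrow\emptyset$. Repeat rounds: in each round set Status $\leftarrow$ false; for $i=1,\dots,(100m^*\log n)/(\mu^*(\Delta^* )^\gamma)$, sample an edge $e\in E$ uniformly at random (independently, with repetition); if $e\in E\setminus H$ and $e$ is underfull w.r.t. $H$, then set Status $\leftarrow$ true, $H\leftarrow H\cup\{e\}$, and then while some edge of $H$ is overfull w.r.t. $H$, remove such an edge from $H$. If at the end of a round Status is false, stop the rounds (this is the last round). Then let $U$ be the set of edges of $E\setminus H$ underfull w.r.t. $H$, take any $V_{small}\subseteq V$ with $\{v:\deg_v(U)\le (1-\epsilon)(\Delta^* )^\gamma/\epsilon\}\subseteq V_{small}\subseteq\{v:\deg_v(U)\le(1+\epsilon)(\Delta^*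 )^\gamma/\epsilon\}$, let $E_{small}:=\{(u,v)\in H\cup U: u,v\in V_{small}\}$, and return $\mu(E_{small})$. ''With high probability'' means with probability at least $1-1/\mathrm{poly}(n)$. *)

From HB Require Import structures.
From mathcomp Require Import all_boot all_order all_algebra.
From mathcomp Require Import all_classical all_reals all_analysis.
Set Implicit Arguments.
Unset Strict Implicit.
Unset Printing Implicit Defensive.
Import Order.TTheory GRing.Theory Num.Theory.
Local Open Scope ring_scope.

(* A graph on the finite vertex type V is given by its edge set
   E : {set {set V}}; an edge is an (unordered) 2-element vertex set. *)
Definition simple_graph (V : finType) (E : {set {set V}}) : Prop :=
  forall e, e \in E -> #|e| = 2%N.

Definition vdeg (V : finType) (H : {set {set V}}) (v : V) : nat :=
  #|[set e in H | v \in e]|.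

Definition edeg (V : finType) (H : {set {set V}}) (e : {set V}) : nat :=
  (\sum_(v in e) vdeg H v)%N.

Definition underfull (R : realType) (eps beta : R) (V : finType)
  (H : {set {set V}}) (e : {set V}) : bool :=
  (edeg H e)%:R < (1 - eps) * beta.

Definition overfull (R : realType) (beta : R) (V : finType)
  (H : {set {set V}}) (e : {set V}) : bool :=
  beta < (edeg H e)%:R.

Definition is_matching (V : finType) (E M : {set {set V}}) : bool :=
  (M \subset E) &&
  [forall e in M, forall f in M, (e != f) ==> [disjoint e & f]].

Definition mu (V : finType) (E : {set {set V}}) : nat :=
  (\max_(M in powerset E | is_matching E M) #|M|)%N.

Definition avg_deg (R : realType) (V : finType) (E : {set {set V}}) : R :=
  (2 * #|E|)%:R / #|V|%:R.

(* A tie-breaking rule for "remove such an (overfull) edge": it must return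
   an overfull edge of H whenever one exists. *)
Definition sel_ok (R : realType) (beta : R) (V : finType)
  (sel : {set {set V}} -> {set V}) : Prop :=
  forall H : {set {set V}}, [exists e in H, overfull beta H e] ->
    sel H \in H /\ overfull beta H (sel H).

(* "while some edge of H is overfull, remove such an edge";
   each iteration removes an edge, so #|H| iterations suffice. *)
Definition cleanup (R : realType) (beta : R) (V : finType)
  (sel : {set {set V}} -> {set V}) (H : {set {set V}}) : {set {set V}} :=
  iter #|H| (fun H' : {set {set V}} => if [exists e in H', overfull beta H' e]
                       then H' :\ sel H' else H') H.

(* one sampling step; state = (H, Status) *)
Definition sample_step (R : realType) (eps beta : R) (V : finType)
  (sel : {set {set V}} -> {set V}) (st : {set {set V}} * bool) (e : {set V})
  : {set {set V}} * bool :=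
  if (e \notin st.1) && underfull eps beta st.1 e
  then (cleanup beta sel (e |: st.1), true) else st.

Definition run_round (R : realType) (eps beta : R) (V : finType)
  (sel : {set {set V}} -> {set V}) (H : {set {set V}}) (s : seq {set V})
  : {set {set V}} * bool :=
  foldl (sample_step eps beta sel) (H, false) s.

(* the samples of round r (0-indexed), rounds having L samples each *)
Definition chunk (V : finType) (L : nat) (s : seq {set V}) (r : nat) : seq {set V} :=
  take L (drop (r * L) s).

(* H at the beginning of round r (equivalently, at the end of round r-1) *)
Fixpoint rstate (R : realType) (eps beta : R) (V : finType)
  (sel : {set {set V}} -> {set V}) (L : nat) (s : seq {set V}) (r : nat)
  : {set {set V}} :=
  match r with
  | 0 => finset.set0
  | r'.+1 => (run_round eps beta sel (rstate eps beta sel L s r') (chunk L s r')).1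
  end.

Definition rstatus (R : realType) (eps beta : R) (V : finType)
  (sel : {set {set V}} -> {set V}) (L : nat) (s : seq {set V}) (r : nat) : bool :=
  (run_round eps beta sel (rstate eps beta sel L s r) (chunk L s r)).2.

Definition Uset (R : realType) (eps beta : R) (V : finType)
  (E H : {set {set V}}) : {set {set V}} :=
  [set e in E | (e \notin H) && underfull eps beta H e].

Definition round_len (R : realType) (n : nat) (mustar mstar Deltastar gamma : R) : nat :=
  Num.truncn (100 * mstar * ln (n%:R : R) / (mustar * Deltastar `^ gamma)).

(* Bad event, decided from the sample stream s of length T: the algorithm
   has a last round r (rounds 0..r-1 had Status true, round r has Status
   false), entirely contained in the T samples, and at its end
   |U| >= mustar Deltastar^gamma. *)
Definition bad_run (R : realType) (eps beta : R) (V : finType)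
  (E : {set {set V}}) (sel : {set {set V}} -> {set V})
  (mustar mstar Deltastar gamma : R) (T : nat) (s : seq {set V}) : bool :=
  let L := round_len #|V| mustar mstar Deltastar gamma in
  [exists r : 'I_T.+1,
    [&& (r.+1 * L <= T)%N,
        [forall r' : 'I_r, rstatus eps beta sel L s r'],
        ~~ rstatus eps beta sel L s r &
        mustar * Deltastar `^ gamma
          <= #|Uset eps beta E (rstate eps beta sel L s r.+1)|%:R]].

(* Probability of the bad event when the first T samples are i.i.d. uniform
   over E: (#bad sample vectors in E^T) / m^T. *)
Definition bad_prob (R : realType) (eps beta : R) (V : finType)
  (E : {set {set V}}) (sel : {set {set V}} -> {set V})
  (mustar mstar Deltastar gamma : R) (T : nat) : R :=
  #|[set w : {ffun 'I_T -> {set V}} |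
       [forall i, w i \in E] &&
       bad_run eps beta E sel mustar mstar Deltastar gamma T (codom w)]|%:R
  / (#|E| ^ T)%:R.

(* Let k = floor beta.  For t = k - 1/2 the potential
   phi(H) = sum_v (t deg_v(H) - deg_v(H)^2) grows by at least 1 whenever an
   underfull edge is inserted (then deg_e(H) <= k - 2) or an overfull edge is
   removed (then deg_e(H) >= k + 1), and phi(H) <= n k^2.  Hence only the first
   n k^2 rounds can end with Status true, and the last round has index
   r <= n k^2.  If |U| >= mustar * Deltastar^gamma at its end, then H did not
   change during that round, so each of its L samples avoided the set U fixed
   by the earlier samples: probability at most (1 - |U|/m)^L <= n^-3 by the
   choice of L.  A union bound over the n k^2 + 1 candidate rounds gives n^-1.  When
   beta < 2 a single edge is already overfull, H stays empty and every round
   that samples anything ends with Status true. *)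

From HB Require Import structures.
From mathcomp Require Import all_boot all_order all_algebra.
From mathcomp Require Import all_classical all_reals all_analysis.
From mathcomp Require Import ring lra.

Set Implicit Arguments.
Unset Strict Implicit.
Unset Printing Implicit Defensive.
Import Order.TTheory GRing.Theory Num.Theory.
Local Open Scope ring_scope.

Lemma count_exists_le_sum (T : Type) (N : nat) (P : 'I_N -> pred T) (l : seq T) :
  (count (fun x => [exists r, P r x]) l <= \sum_(r < N) count (P r) l)%N.
Proof.
elim: l => [|x l IH] /=; first by rewrite big1.
rewrite big_split /= leq_add //.
by case: existsP => [[r Pr]|_] //; rewrite (bigD1 r) //= Pr.
Qed.

Section Words.
Variables (X : finType) (E : {set X}).

Fixpoint words (T : nat) : seq (seq X) :=
  if T is T'.+1 then flatten [seq [seq x :: s | s <- words T'] | x <- enum E]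
  else [:: [::]].

Lemma mem_words T s : size s = T -> all (mem E) s -> s \in words T.
Proof.
elim: T s => [|T IH] [|x s] //= [sT] /andP[xE sE].
apply/flatten_mapP; exists x; first by rewrite mem_enum.
exact/map_f/IH.
Qed.

Lemma count_wordsS T (P : pred (seq X)) :
  count P (words T.+1) = (\sum_(x in E) count (fun s => P (x :: s)) (words T))%N.
Proof.
rewrite /= count_flatten sumnE !big_map -big_enum /=.
by apply: eq_bigr => x _; rewrite count_map.
Qed.

Lemma size_words T : size (words T) = (#|E| ^ T)%N.
Proof.
elim: T => [|T IH] //.
rewrite -count_predT count_wordsS.
under eq_bigr do rewrite count_predT IH.
by rewrite sum_nat_const expnS.
Qed.

Lemma card_ffun_le_count_words T (P : pred (seq X)) :
  (#|[set w : {ffun 'I_T -> X} | [forall i, w i \in E] && P (codom w)]|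
     <= count P (words T))%N.
Proof.
rewrite cardE -size_filter -(size_map (fun w : {ffun 'I_T -> X} => codom w)).
apply: uniq_leq_size.
  rewrite map_inj_uniq ?enum_uniq // => w1 w2.
  by rewrite !codom_ffun => /val_inj/(can_inj fgraphK).
move=> s /mapP[w]; rewrite mem_enum inE => /andP[/forallP wE Pw] ->.
rewrite mem_filter Pw mem_words ?size_codom ?card_ord //.
by apply/allP => x /codomP[i ->]; apply: wE.
Qed.

Variable R : realType.

Lemma count_words_prefix_in (a : R) (B : {set X}) (L T : nat) :
  0 <= a -> #|B|%:R <= a -> (L <= T)%N ->
  (count (fun s => all (mem B) (take L s)) (words T))%:R
    <= a ^+ L * #|E|%:R ^+ (T - L).
Proof.
move=> a0 Ba; elim: L T => [|L IH] T LT.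
  rewrite expr0 mul1r subn0 -natrX -size_words ler_nat -count_predT.
  exact: sub_count.
case: T LT => [|T] // LT.
rewrite count_wordsS natr_sum subSS.
apply: (@le_trans _ _ (\sum_(x in E) ((x \in B)%:R * (a ^+ L * #|E|%:R ^+ (T - L))))).
  apply: ler_sum => x _ /=; case: (x \in B) => /=; first by rewrite mul1r IH.
  by rewrite mul0r (@eq_count _ _ pred0) ?count_pred0.
rewrite -mulr_suml exprS -mulrA ler_wpM2r ?mulr_ge0 ?exprn_ge0 //.
rewrite -natr_sum (le_trans _ Ba) // ler_nat -sum1_card big_mkcond /=.
rewrite [X in (_ <= X)%N]big_mkcond /=.
by apply: leq_sum => x _; case: (x \in E); case: (x \in B).
Qed.

(* The allowed set may depend on the [j] samples preceding the window but not
   on the window itself, so the window samples stay independent of it. *)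
Lemma count_words_window_in (a : R) (A : seq X -> {set X}) (j L T : nat) :
  0 <= a -> (forall p, #|A p|%:R <= a) -> (j + L <= T)%N ->
  (count (fun s => all (mem (A (take j s))) (take L (drop j s))) (words T))%:R
    <= a ^+ L * #|E|%:R ^+ (T - L).
Proof.
move=> a0; elim: j T A => [|j IH] T A Aa jLT.
  under eq_count do rewrite take0 drop0.
  exact: count_words_prefix_in.
case: T jLT => [|T] // jLT.
rewrite count_wordsS natr_sum.
apply: (@le_trans _ _ (\sum_(x in E) (a ^+ L * #|E|%:R ^+ (T - L)))).
  by apply: ler_sum => x _; apply: (IH T (fun p => A (x :: p))).
rewrite sumr_const -[X in X <= _]mulr_natr -mulrA -exprSr subSn //.
by move: jLT; rewrite addSn ltnS; apply: leq_trans; apply: leq_addl.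
Qed.

Definition chunk_in (L T : nat) (Q : nat -> seq X -> bool)
    (A : nat -> seq X -> {set X}) (r : nat) (s : seq X) : bool :=
  [&& (r.+1 * L <= T)%N, Q r (take (r * L) s)
    & all (mem (A r (take (r * L) s))) (take L (drop (r * L) s))].

Definition some_chunk_in (N L T : nat) (Q : nat -> seq X -> bool)
    (A : nat -> seq X -> {set X}) (s : seq X) : bool :=
  [exists r : 'I_N, chunk_in L T Q A r s].

Lemma card_some_chunk_in (a : R) (N L T : nat) (Q : nat -> seq X -> bool)
    (A : nat -> seq X -> {set X}) :
  (0 < #|E|)%N -> 0 <= a -> (forall r p, Q r p -> #|A r p|%:R <= a) ->
  #|[set w : {ffun 'I_T -> X} |
      [forall i, w i \in E] && some_chunk_in N L T Q A (codom w)]|%:R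
    / (#|E| ^ T)%:R <= N%:R * (a / #|E|%:R) ^+ L.
Proof.
move=> E0 a0 Aa; have m0 : 0 < #|E|%:R :> R by rewrite ltr0n.
rewrite ler_pdivrMr ?natrX ?exprn_gt0 // -mulrA; set b := (_ / _) ^+ L * _.
have -> : N%:R * b = \sum_(r < N) b by rewrite sumr_const card_ord mulr_natl.
apply: (@le_trans _ _ (\sum_(r < N) count (chunk_in L T Q A r) (words T))%:R).
  rewrite ler_nat; apply: leq_trans (card_ffun_le_count_words _ _) _.
  exact: count_exists_le_sum.
rewrite natr_sum; apply: ler_sum => r _.
have [rLT|LTr] := leqP (r.+1 * L) T; last first.
  rewrite (@eq_count _ _ pred0) ?count_pred0 ?mulr_ge0 ?exprn_ge0 ?divr_ge0 //.
  by move=> s; rewrite /chunk_in leqNgt LTr.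
pose A' p := if Q r p then A r p else finset.set0.
have A'a p : #|A' p|%:R <= a.
  by rewrite /A'; case: ifP => [/Aa|_] //; rewrite cards0.
have rLT' : (r * L + L <= T)%N by rewrite -mulSnr.
have -> : b = a ^+ L * #|E|%:R ^+ (T - L).
  have LT : (L <= T)%N by apply: leq_trans rLT'; apply: leq_addl.
  rewrite /b -{1}(subnK LT) exprD expr_div_n; field.
  by rewrite expf_neq0 ?gt_eqF.
apply: le_trans (count_words_window_in a0 A'a rLT').
rewrite ler_nat; apply: sub_count => s /and3P[_ Qs].
by rewrite /A' Qs.
Qed.

End Words.

Section Potential.
Variables (R : realType) (V : finType).
Implicit Types (H : {set {set V}}) (e : {set V}).

Lemma vdeg_set0 v : vdeg (finset.set0 : {set {set V}}) v = 0%N.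
Proof. by apply/eqP; rewrite cards_eq0; apply/eqP/setP => e; rewrite !inE. Qed.

Lemma vdeg_setU1 H e v : e \notin H -> vdeg (e |: H) v = (vdeg H v + (v \in e))%N.
Proof.
move=> eH; rewrite /vdeg; case: (boolP (v \in e)) => ve.
  have -> : [set f in e |: H | v \in f] = e |: [set f in H | v \in f].
    by apply/setP => f; rewrite !inE; case: eqP => [->|] //=; rewrite ve.
  by rewrite cardsU1 inE (negbTE eH) addn1 add1n.
rewrite addn0; apply: eq_card => f; rewrite !inE.
by case: eqP => [->|] //=; rewrite (negbTE ve) andbF.
Qed.

Lemma edeg_setU1 H e : e \notin H -> edeg (e |: H) e = (edeg H e + #|e|)%N.
Proof.
move=> eH; rewrite /edeg -sum1_card -big_split /=.
by apply: eq_bigr => v ve; rewrite vdeg_setU1 // ve.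
Qed.

Definition potential (t : R) H : R :=
  \sum_(v : V) (t * (vdeg H v)%:R - (vdeg H v)%:R ^+ 2).

Lemma potential_set0 t : potential t finset.set0 = 0.
Proof. by rewrite /potential big1 // => v _; rewrite vdeg_set0 mulr0 expr0n subr0. Qed.

Lemma potential_setU1 t H e : e \notin H ->
  potential t (e |: H) = potential t H + #|e|%:R * (t - 1) - 2 * (edeg H e)%:R.
Proof.
move=> eH; rewrite /potential.
under eq_bigr => v _ do rewrite vdeg_setU1 // natrD.
have -> : \sum_(v : V) (t * ((vdeg H v)%:R + (v \in e)%:R)
                          - ((vdeg H v)%:R + (v \in e)%:R) ^+ 2)
  = \sum_(v : V) ((t * (vdeg H v)%:R - (vdeg H v)%:R ^+ 2)
                  + (if v \in e then t - 1 - 2 * (vdeg H v)%:R else 0)).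
  by apply: eq_bigr => v _; case: (v \in e) => /=; [ring | rewrite !addr0].
rewrite big_split /= -big_mkcond /= -addrA; congr (_ + _).
by rewrite sumrB sumr_const /edeg natr_sum mulr_sumr mulr_natl.
Qed.

Lemma potential_le t u H : t <= u -> potential t H <= #|V|%:R * (u ^+ 2 / 4).
Proof.
move=> tu; rewrite mulr_natl -[X in _ <= X]sumr_const; apply: ler_sum => v _.
have : 0 <= (vdeg H v)%:R :> R by [].
have := sqr_ge0 (u - 2 * (vdeg H v)%:R); nra.
Qed.

End Potential.

Section Rounds.
Variables (R : realType) (eps beta : R) (V : finType)
  (sel : {set {set V}} -> {set V}).

Lemma foldl_sample_step_status (s : seq {set V}) (st : {set {set V}} * bool) :
  st.2 -> (foldl (sample_step eps beta sel) st s).2.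
Proof.
elim: s st => [|e s IH] st //= st2; apply: IH.
by rewrite /sample_step; case: ifP.
Qed.

Lemma run_round_false (H : {set {set V}}) (s : seq {set V}) :
  ~~ (run_round eps beta sel H s).2 ->
  (run_round eps beta sel H s).1 = H /\
  all (fun e => ~~ ((e \notin H) && underfull eps beta H e)) s.
Proof.
rewrite /run_round; elim: s => [|e s IH] //=.
rewrite {2 4}/sample_step /=; case: ifP => [_|eHu /IH[-> ->]].
  by rewrite foldl_sample_step_status.
by split => //; rewrite eHu.
Qed.

Lemma rstate_take (L : nat) (s : seq {set V}) (r j : nat) : (r * L <= j)%N ->
  rstate eps beta sel L (take j s) r = rstate eps beta sel L s r.
Proof.
elim: r => [|r IH] //= rLj.
have rLj' : (r * L + L <= j)%N by rewrite -mulSnr.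
rewrite IH; last exact: leq_trans (leq_addr _ _) rLj'.
by rewrite /chunk !take_drop take_takel // addnC.
Qed.

End Rounds.

Section PotentialGrowth.
Variables (R : realType) (eps beta : R) (V : finType)
  (sel : {set {set V}} -> {set V}) (E : {set {set V}}) (k : nat).
Hypothesis simpleE : simple_graph E.
Hypothesis underfull_gap : forall a : nat, a%:R < (1 - eps) * beta -> (a + 2 <= k)%N.
Hypothesis overfull_gap : forall b : nat, beta < b%:R -> (k < b)%N.
Hypothesis sel_overfull : sel_ok beta sel.

(* The half-integer shift makes insertions and removals both gain at least 1. *)
Let t : R := k%:R - 2^-1.

Lemma potential_insert (H : {set {set V}}) (e : {set V}) :
  e \in E -> e \notin H -> underfull eps beta H e ->
  potential t H + 1 <= potential t (e |: H).
Proof.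
move=> eE eH /underfull_gap; rewrite -(ler_nat R) natrD => ek.
rewrite potential_setU1 // simpleE // /t; lra.
Qed.

Lemma potential_remove (H : {set {set V}}) (e : {set V}) :
  e \in E -> e \in H -> overfull beta H e ->
  potential t H + 1 <= potential t (H :\ e).
Proof.
move=> eE eH /overfull_gap; rewrite -(ler_nat R) -natr1.
have eHe : e \notin H :\ e by rewrite setD11.
have := edeg_setU1 eHe; have := potential_setU1 t eHe.
rewrite finset.setD1K // simpleE // => -> ->; rewrite natrD /t; lra.
Qed.

Lemma cleanup_potential (H : {set {set V}}) : H \subset E ->
  cleanup beta sel H \subset H /\ potential t H <= potential t (cleanup beta sel H).
Proof.
rewrite /cleanup => HE; elim: #|H| => [|n [subH leH]] //=.
case: ifP => // /sel_overfull[selH selO].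
split; first by apply: fintype.subset_trans subH; rewrite subD1set.
have selE := fintype.subsetP HE _ (fintype.subsetP subH _ selH).
by apply: le_trans leH (le_trans _ (potential_remove selE selH selO)); rewrite lerDl.
Qed.

(* Status only turns true together with an insertion, which pays for it. *)
Lemma sample_step_potential (st : {set {set V}} * bool) (e : {set V}) :
  e \in E -> st.1 \subset E ->
  let st' := sample_step eps beta sel st e in
  st'.1 \subset E /\ potential t st.1 - st.2%:R <= potential t st'.1 - st'.2%:R.
Proof.
move=> eE stE /=; rewrite /sample_step; case: ifP => [/andP[eH uf]|_] //.
have eHE : e |: st.1 \subset E by rewrite finset.subUset finset.sub1set eE.
have [subH leH] := cleanup_potential eHE.
split; first exact: fintype.subset_trans subH eHE.
by have := potential_insert eE eH uf; case: st.2 => /=; lra.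
Qed.

Lemma run_round_potential (H : {set {set V}}) (s : seq {set V}) :
  H \subset E -> all (mem E) s ->
  let st := run_round eps beta sel H s in
  st.1 \subset E /\ potential t H + st.2%:R <= potential t st.1.
Proof.
move=> HE sE; rewrite /run_round.
suff /(_ (H, false) HE) /= [-> ?] : forall st : {set {set V}} * bool, st.1 \subset E ->
  let st' := foldl (sample_step eps beta sel) st s in
  st'.1 \subset E /\ potential t st.1 - st.2%:R <= potential t st'.1 - st'.2%:R.
  by split => //; lra.
elim: s sE => [|e s IH] /= => [_|/andP[eE sE]] st stE; first by split => //.
have [stE' le1] := sample_step_potential eE stE.
have [stE'' le2] := IH sE _ stE'.
by split => //; apply: le_trans le2.
Qed.

Lemma rstate_potential (L : nat) (s : seq {set V}) (r : nat) : all (mem E) s ->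
  (forall r', (r' < r)%N -> rstatus eps beta sel L s r') ->
  rstate eps beta sel L s r \subset E /\ r%:R <= potential t (rstate eps beta sel L s r).
Proof.
move=> sE; elim: r => [|r IH] done_r /=.
  by rewrite potential_set0 finset.sub0set.
have [HE le_r] := IH (fun r' lt_r' => done_r r' (ltnW lt_r')).
have chunkE : all (mem E) (chunk L s r).
  by apply/allP => e /mem_take /mem_drop; apply: (allP sE).
have [HE' le_round] := run_round_potential HE chunkE.
have := done_r r (ltnSn r); rewrite /rstatus => st_r; rewrite st_r in le_round.
by split => //; rewrite -natr1; apply: le_trans le_round; rewrite lerD2r.
Qed.

Lemma rounds_le (L : nat) (s : seq {set V}) (r : nat) : all (mem E) s ->
  (forall r', (r' < r)%N -> rstatus eps beta sel L s r') -> (r <= #|V| * k ^ 2)%N.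
Proof.
move=> sE /(rstate_potential sE) [_ le_r].
have tk : t <= k%:R by rewrite /t; lra.
have := le_trans le_r (potential_le _ tk); rewrite -(ler_nat R) natrM natrX.
have : 0 <= #|V|%:R * k%:R ^+ 2 :> R by []; lra.
Qed.

End PotentialGrowth.

Section SmallBeta.
Variables (R : realType) (eps beta : R) (V : finType)
  (sel : {set {set V}} -> {set V}) (E : {set {set V}}).
Hypothesis simpleE : simple_graph E.
Hypothesis sel_overfull : sel_ok beta sel.
Hypothesis beta_lt2 : beta < 2.
Hypothesis underfull_empty : 0 < (1 - eps) * beta.

Lemma cleanup_set1 (e : {set V}) : e \in E -> cleanup beta sel [set e] = finset.set0.
Proof.
move=> eE; rewrite /cleanup cards1 /=.
have eO : overfull beta [set e] e.
  rewrite /overfull /edeg (eq_bigr (fun _ => 1%N)) ?sum1_card ?simpleE //.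
  move=> v ve; rewrite /vdeg (_ : [set f in [set e] | v \in f] = [set e]) ?cards1 //.
  by apply/setP => f; rewrite !inE; case: eqP => [->|].
have exO : [exists e' in [set e], overfull beta [set e] e'].
  by apply/existsP; exists e; rewrite set11 eO.
by rewrite exO; have [/set1P -> _] := sel_overfull exO; rewrite finset.setDv.
Qed.

Lemma foldl_sample_step_set0 (s : seq {set V}) (b : bool) : all (mem E) s ->
  (foldl (sample_step eps beta sel) (finset.set0, b) s).1 = finset.set0.
Proof.
elim: s b => [|e s IH] b //= /andP[eE sE].
rewrite {2}/sample_step; case: ifP => _; last exact: IH.
by rewrite finset.setU0 cleanup_set1 //; apply: IH.
Qed.

Lemma rstatus_small_beta (L : nat) (s : seq {set V}) (r : nat) :
  all (mem E) s -> (0 < L)%N -> (r.+1 * L <= size s)%N -> rstatus eps beta sel L s r.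
Proof.
move=> sE L0; rewrite mulSnr => rLs.
have rstate0 r' : rstate eps beta sel L s r' = finset.set0.
  elim: r' => [|r' IH] //=; rewrite IH /run_round foldl_sample_step_set0 //.
  by apply/allP => e /mem_take /mem_drop; apply: (allP sE).
rewrite /rstatus rstate0; apply/negPn/negP => /run_round_false[_].
have : (0 < size (chunk L s r))%N.
  rewrite /chunk size_takel // size_drop leq_subRL //.
  exact: leq_trans (leq_addr _ _) rLs.
case: (chunk L s r) => [|e c] //= _ /andP[].
rewrite finset.in_set0 /underfull /edeg big1 => [|v _]; last exact: vdeg_set0.
by rewrite underfull_empty.
Qed.

End SmallBeta.

Section BadRun.
Variables (R : realType) (eps beta : R) (V : finType)
  (sel : {set {set V}} -> {set V}) (E : {set {set V}})
  (mustar mstar Deltastar gamma : R) (T : nat).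

Local Notation K := (mustar * Deltastar `^ gamma).
Local Notation L := (round_len #|V| mustar mstar Deltastar gamma).
Local Notation bad := (bad_run eps beta E sel mustar mstar Deltastar gamma T).

Lemma Uset_sub (H : {set {set V}}) : Uset eps beta E H \subset E.
Proof. by apply/fintype.subsetP => e; rewrite inE => /andP[]. Qed.

Lemma bad_prob_eq0 :
  (forall w : {ffun 'I_T -> {set V}}, (forall i, w i \in E) -> ~~ bad (codom w)) ->
  bad_prob eps beta E sel mustar mstar Deltastar gamma T = 0.
Proof.
move=> good; rewrite /bad_prob (_ : finset _ = finset.set0) ?cards0 ?mul0r //.
apply/setP => w; rewrite !inE; apply/negP => /andP[/forallP wE].
exact/negP/good.
Qed.

Lemma bad_prob_large_K : #|E|%:R < K ->
  bad_prob eps beta E sel mustar mstar Deltastar gamma T = 0.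
Proof.
move=> mK; apply: bad_prob_eq0 => w _; apply/existsP => -[r /and4P[_ _ _]].
apply/negP; rewrite -ltNge; apply: le_lt_trans mK.
by rewrite ler_nat subset_leq_card ?Uset_sub.
Qed.

Lemma bad_prob_small_beta :
  simple_graph E -> sel_ok beta sel -> beta < 2 -> 0 < (1 - eps) * beta -> (0 < L)%N ->
  bad_prob eps beta E sel mustar mstar Deltastar gamma T = 0.
Proof.
move=> simpleE sel_overfull beta2 underfull0 L0; apply: bad_prob_eq0 => w wE.
apply/existsP => -[r /and4P[rLT _ /negP stop _]]; apply: stop.
apply: (rstatus_small_beta simpleE sel_overfull beta2 underfull0 _ L0).
  by apply/allP => _ /codomP[i ->]; apply: wE.
by rewrite size_codom card_ord.
Qed.

Section Progress.
Variable k : nat.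
Hypothesis simpleE : simple_graph E.
Hypothesis underfull_gap : forall a : nat, a%:R < (1 - eps) * beta -> (a + 2 <= k)%N.
Hypothesis overfull_gap : forall b : nat, beta < b%:R -> (k < b)%N.
Hypothesis sel_overfull : sel_ok beta sel.

Local Notation U p r := (Uset eps beta E (rstate eps beta sel L p r)).

(* The last round leaves [H] unchanged, so its samples all avoided the [U] of
   its start, which [rstate_take] shows to depend on earlier samples only. *)
Lemma bad_run_some_chunk_in (s : seq {set V}) : all (mem E) s -> bad s ->
  some_chunk_in (#|V| * k ^ 2).+1 L T
    (fun r p => K <= #|U p r|%:R) (fun r p => E :\: U p r) s.
Proof.
move=> sE /existsP[r /and4P[rLT /forallP done_r /run_round_false[stay avoid] KU]].
have r_le : (r < (#|V| * k ^ 2).+1)%N.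
  rewrite ltnS; apply: (rounds_le simpleE underfull_gap overfull_gap sel_overfull sE).
  by move=> r' lt_r'; apply: (done_r (Ordinal lt_r')).
apply/existsP; exists (Ordinal r_le); rewrite /chunk_in /= rLT rstate_take //.
move: KU; rewrite /= stay => -> /=; apply/allP => e e_r.
have eE : e \in E by apply: (allP sE); apply: mem_drop (mem_take e_r).
by rewrite !inE eE (negbTE (allP avoid e e_r)).
Qed.

Lemma bad_prob_le : (0 < #|E|)%N -> K <= #|E|%:R ->
  bad_prob eps beta E sel mustar mstar Deltastar gamma T
    <= (#|V| * k ^ 2).+1%:R * (1 - K / #|E|%:R) ^+ L.
Proof.
move=> E0 Km; have m0 : 0 < #|E|%:R :> R by rewrite ltr0n.
have -> : 1 - K / #|E|%:R = (#|E|%:R - K) / #|E|%:R by field; rewrite gt_eqF.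
have a0 : 0 <= #|E|%:R - K by rewrite subr_ge0.
have U_large r p : K <= #|U p r|%:R -> #|E :\: U p r|%:R <= #|E|%:R - K.
  move=> KU; rewrite cardsDS ?Uset_sub // natrB ?subset_leq_card ?Uset_sub //.
  by rewrite lerB.
apply: le_trans (card_some_chunk_in (#|V| * k ^ 2).+1 L T E0 a0 U_large).
rewrite ler_wpM2r ?invr_ge0 // ler_nat; apply: subset_leq_card.
apply/fintype.subsetP => w; rewrite !inE => /andP[wE bad_w]; rewrite wE /=.
apply: bad_run_some_chunk_in => //.
by apply/allP => _ /codomP[i ->]; apply: (forallP wE).
Qed.

End Progress.
End BadRun.

Section Estimates.
Variable R : realType.

Lemma mu_gt0 (V : finType) (E : {set {set V}}) : (0 < #|E|)%N -> (0 < mu E)%N.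
Proof.
rewrite card_gt0 => /set0Pn[e eE].
apply: (@leq_trans #|[set e]|); first by rewrite cards1.
rewrite /mu; apply: (@leq_bigmax_cond _ (fun M => (M \in powerset E) && is_matching E M)
                                      (fun M => #|M|)).
rewrite powersetE /is_matching !finset.sub1set eE /=.
by apply/forall_inP => _ /set1P ->; apply/forall_inP => _ /set1P ->; rewrite eqxx.
Qed.

Lemma threshold_gt0 (V : finType) (E : {set {set V}}) (eps mustar Deltastar gamma : R) :
  (0 < #|V|)%N -> (0 < #|E|)%N -> 0 < eps -> 0 < gamma ->
  (mu E)%:R / (2 + eps) <= mustar -> avg_deg R E <= Deltastar ->
  0 < mustar * Deltastar `^ gamma.
Proof.
move=> V0 E0 eps0 g0 mu_le avg_le; rewrite mulr_gt0 ?powR_gt0 //.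
  by apply: lt_le_trans mu_le; rewrite divr_gt0 ?ltr0n ?mu_gt0 ?addr_gt0.
by apply: lt_le_trans avg_le; rewrite /avg_deg divr_gt0 ?ltr0n ?muln_gt0 ?E0.
Qed.

Lemma truncn_underfull_gap (eps beta : R) (a : nat) :
  0 < eps < 1 -> 1 <= eps ^+ 3 * beta -> 2 <= beta ->
  a%:R < (1 - eps) * beta -> (a + 2 <= Num.truncn beta)%N.
Proof.
move=> /andP[eps0 eps1] eps3 beta2 a_lt.
have beta0 : 0 <= beta by apply: le_trans beta2.
rewrite truncn_ge_nat // natrD leNgt; apply/negP => beta_lt.
have a1 : 1 <= a%:R :> R.
  by case: a a_lt beta_lt => [|a] _; rewrite ?ler1n // add0r; lra.
have expand : (1 - eps) * beta = beta - eps * beta by ring.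
have eps_beta : eps * beta < 2 by lra.
have eps23 : 3 * eps < 2 by nra.
have : eps ^+ 3 * beta = eps ^+ 2 * (eps * beta) by rewrite exprSr; ring.
rewrite expr2; nra.
Qed.

Lemma one_sub_expn_le (x : R) (L : nat) : x <= 1 -> (1 - x) ^+ L <= expR (- x * L%:R).
Proof.
move=> x1; rewrite expRM_natr lerXn2r ?nnegrE ?subr_ge0 ?expR_ge0 //.
exact: expR_ge1Dx.
Qed.

Lemma round_len_mass (n : nat) (m mustar mstar Deltastar gamma : R) :
  let K := mustar * Deltastar `^ gamma in
  0 < K <= m -> m <= mstar -> 1 <= ln (n%:R : R) ->
  3 * ln (n%:R : R) <= K / m * (round_len n mustar mstar Deltastar gamma)%:R.
Proof.
move=> K /andP[K0 Km] m_le ln1; have m0 : 0 < m by apply: lt_le_trans Km.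
set L := round_len _ _ _ _ _.
have L1 : 100 * mstar * ln (n%:R : R) / K < L%:R + 1 by rewrite natr1 truncnS_gt.
have p0 : 0 < K / m by rewrite divr_gt0.
have p1 : K / m <= 1 by rewrite ler_pdivrMr // mul1r.
have q1 : 1 <= mstar / m by rewrite ler_pdivlMr // mul1r.
move: L1; rewrite -(ltr_pM2l p0).
have -> : K / m * (100 * mstar * ln (n%:R : R) / K) = 100 * (mstar / m) * ln (n%:R : R).
  by field; rewrite !gt_eqF.
nra.
Qed.

Lemma round_len_tail (n : nat) (m mustar mstar Deltastar gamma : R) :
  let K := mustar * Deltastar `^ gamma in
  expR 1 <= n%:R :> R -> 0 < K <= m -> m <= mstar ->
  (1 - K / m) ^+ round_len n mustar mstar Deltastar gamma <= n%:R ^- 3.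
Proof.
move=> K en Km m_le; have n0 : 0 < n%:R :> R := lt_le_trans (expR_gt0 1) en.
have ln1 : 1 <= ln (n%:R : R) by rewrite -ler_expR lnK.
have [K0 Kle] := andP Km; have m0 : 0 < m := lt_le_trans K0 Kle.
apply: le_trans (one_sub_expn_le _ _) _; first by rewrite ler_pdivrMr // mul1r.
rewrite -[n%:R in X in _ <= X]lnK ?posrE // -expRM_natl -expRN ler_expR mulNr.
by rewrite lerN2; apply: round_len_mass.
Qed.

Lemma round_len_gt0 (n : nat) (m mustar mstar Deltastar gamma : R) :
  let K := mustar * Deltastar `^ gamma in
  expR 1 <= n%:R :> R -> 0 < K <= m -> m <= mstar ->
  (0 < round_len n mustar mstar Deltastar gamma)%N.
Proof.
move=> K en Km m_le; have n0 : 0 < n%:R :> R := lt_le_trans (expR_gt0 1) en.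
have ln1 : 1 <= ln (n%:R : R) by rewrite -ler_expR lnK.
have := round_len_mass Km m_le ln1; rewrite lt0n; apply: contraTneq => ->.
by rewrite mulr0 -ltNge; lra.
Qed.

Lemma rounds_cube_le (n k : nat) : (k ^ 2 < n)%N ->
  (n * k ^ 2).+1%:R * n%:R ^- 3 <= n%:R^-1 :> R.
Proof.
move=> kn; have n0 : 0 < n%:R :> R by rewrite ltr0n (leq_ltn_trans _ kn).
have -> : n%:R^-1 = n%:R ^+ 2 * n%:R ^- 3 :> R by field; rewrite gt_eqF.
rewrite ler_wpM2r ?invr_ge0 ?exprn_ge0 // -natrX ler_nat.
by rewrite expnS expn1 ltn_pmul2l // (leq_ltn_trans _ kn).
Qed.

End Estimates.

Theorem corollary3p3 (R : realType) (eps beta : R) :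
  0 < eps < 1 -> (eps ^+ 3)^-1 <= beta ->
  exists c : R, 0 < c /\ exists N : nat,
  forall (V : finType) (E : {set {set V}}) (mustar mstar Deltastar gamma : R)
         (sel : {set {set V}} -> {set V}) (T : nat),
    (N <= #|V|)%N ->
    simple_graph E -> (0 < #|E|)%N ->
    (mu E)%:R / (2 + eps) <= mustar -> mustar <= #|V|%:R ->
    avg_deg R E <= Deltastar -> Deltastar <= #|V|%:R ->
    #|E|%:R <= mstar ->
    0 < gamma < 1 ->
    sel_ok beta sel ->
    bad_prob eps beta E sel mustar mstar Deltastar gamma T <= #|V|%:R `^ (- c).
Proof.
move=> /andP[eps0 eps1] beta_ge; have eps3_0 : 0 < eps ^+ 3 by rewrite exprn_gt0.
have eps3 : 1 <= eps ^+ 3 * beta by rewrite -ler_pdivrMl // mulr1.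
have beta0 : 0 < beta by apply: lt_le_trans beta_ge; rewrite invr_gt0.
set k := Num.truncn beta.
exists 1; split => //; exists (maxn (k ^ 2).+1 (Num.truncn (expR 1 : R)).+1).
move=> V E mustar mstar Deltastar gamma sel T; rewrite geq_max => /andP[kn en].
move=> simpleE E0 mu_le _ avg_le _ m_le /andP[g0 _] sel_overfull.
have {}en : expR 1 <= #|V|%:R :> R by rewrite ltW // -truncn_lt_nat ?expR_ge0.
have K0 := threshold_gt0 (leq_ltn_trans (leq0n _) kn) E0 eps0 g0 mu_le avg_le.
rewrite powR_inv1 ?ler0n //.
have [Km|mK] := leP (mustar * Deltastar `^ gamma) #|E|%:R; last first.
  by rewrite bad_prob_large_K ?invr_ge0.
have K_ok : 0 < mustar * Deltastar `^ gamma <= #|E|%:R by rewrite K0.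
have [beta2|beta2] := ltP beta 2.
  have L0 := round_len_gt0 en K_ok m_le.
  by rewrite bad_prob_small_beta ?mulr_gt0 ?subr_gt0 ?invr_ge0.
have underfull_gap a : a%:R < (1 - eps) * beta -> (a + 2 <= k)%N.
  by apply: truncn_underfull_gap; rewrite ?eps0.
have overfull_gap b : beta < b%:R -> (k < b)%N by rewrite truncn_lt_nat // ltW.
have := bad_prob_le mstar T simpleE underfull_gap overfull_gap sel_overfull E0 Km.
move/le_trans; apply.
apply: le_trans (rounds_cube_le _ kn).
by rewrite ler_wpM2l // round_len_tail.
Qed.
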